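(* Let $|\psi\rangle=\alpha|0\rangle+\beta|1\rangle$ be a pure qubit state and let $R=-|\alpha|^2\log_2|\alpha|^2-|\beta|^2\log_2|\beta|^2=R_I(|\psi\rangle)$. For every $\varepsilon>0$ there is $n_0$ such that for all $n\ge n_0$ there exists an incoherent operation on $(\mathbb C^2)^{\otimes n}$ with respect to the product computational basis, with Kraus operators $\{K_j\}$, such that for each outcome $j$ with $p_j=\|K_j|\psi\rangle^{\otimes n}\|^2>0$ the normalized post-measurement state $K_j|\psi\rangle^{\otimes n}/\sqrt{p_j}$ is, up to an incoherent relabeling of basis states (equivalently, a permutation of computational basis vectors), the state $|\Psi_2\rangle^{\otimes r_j}\otimes|0\cdots0\rangle$ for some integer $r_j\ge0$, where $|\Psi_2\rangle=(|0\rangle+|1\rangle)/\sqrt2$, and the expected number of distilled copies satisfies $\sum_jp_jr_j\ge n(R-\varepsilon)$.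
   Context: An incoherent operation with respect to an orthonormal basis $\{|i\rangle\}$ is a CPTP map $\Phi(\rho)=\sum_jK_j\rho K_j^\dagger$ with $\sum_jK_j^\dagger K_j=\mathbb 1$ such that $K_j\delta K_j^\dagger$ is diagonal in that basis whenever $\delta$ is diagonal in that basis. On $(\mathbb C^2)^{\otimes n}$ the basis is the product computational basis $\{|x_1\cdots x_n\rangle: x_k\in\{0,1\}\}$. For a pure state $|\phi\rangle=\sum_ia_i|i\rangle$, $R_I(|\phi\rangle)=-\sum_i|a_i|^2\log_2|a_i|^2$. *)

(* Complex numbers are
   modelled as pairs of reals; operators on (C^2)^{(x)n} as 2^n x 2^n
   complex matrices indexed by nat (entries outside [0,2^n) are ignored). *)
From Stdlib Require Import Reals Arith.
Open Scope R_scope.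

Definition Cx : Type := (R * R)%type.
Definition RtoC (x : R) : Cx := (x, 0).
Definition C0 : Cx := RtoC 0.
Definition C1 : Cx := RtoC 1.
Definition Cadd (z w : Cx) : Cx := (fst z + fst w, snd z + snd w).
Definition Cmul (z w : Cx) : Cx :=
  (fst z * fst w - snd z * snd w, fst z * snd w + snd z * fst w).
Definition Cconj (z : Cx) : Cx := (fst z, - snd z).
Definition Cnorm2 (z : Cx) : R := fst z * fst z + snd z * snd z.

Fixpoint Csum (f : nat -> Cx) (n : nat) : Cx :=
  match n with
  | O => C0
  | S n' => Cadd (Csum f n') (f n')
  end.
Fixpoint Rsum (f : nat -> R) (n : nat) : R :=
  match n with
  | O => 0
  | S n' => Rsum f n' + f n'
  end.

Definition Mat : Type := nat -> nat -> Cx.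
Definition Vec : Type := nat -> Cx.
Definition Mmul (D : nat) (A B : Mat) : Mat :=
  fun i k => Csum (fun j => Cmul (A i j) (B j k)) D.
Definition Madj (A : Mat) : Mat := fun i j => Cconj (A j i).
Definition Mapply (D : nat) (A : Mat) (v : Vec) : Vec :=
  fun i => Csum (fun k => Cmul (A i k) (v k)) D.
Definition Vnorm2 (D : nat) (v : Vec) : R := Rsum (fun i => Cnorm2 (v i)) D.
Definition Vscale (c : Cx) (v : Vec) : Vec := fun i => Cmul c (v i).

Definition is_diag (D : nat) (M : Mat) : Prop :=
  forall i j, (i < D)%nat -> (j < D)%nat -> i <> j -> M i j = C0.

Definition incoherent_op (D m : nat) (K : nat -> Mat) : Prop :=
  (forall i k, (i < D)%nat -> (k < D)%nat ->
     Csum (fun j => Mmul D (Madj (K j)) (K j) i k) m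
       = (if Nat.eqb i k then C1 else C0)) /\
  (forall j, (j < m)%nat -> forall delta : Mat, is_diag D delta ->
     is_diag D (Mmul D (Mmul D (K j) delta) (Madj (K j)))).

(* |psi>^{(x)n} with |psi> = alpha|0> + beta|1>: the amplitude of |x_1...x_n>
   (index i, bits of i) is the product over qubits of alpha or beta. *)
Fixpoint psi_tensor (alpha beta : Cx) (n : nat) (i : nat) : Cx :=
  match n with
  | O => C1
  | S n' => Cmul (if Nat.testbit i n' then beta else alpha)
                 (psi_tensor alpha beta n' i)
  end.

(* |Psi_2>^{(x) r} (x) |0...0> on n qubits, qubit 1 being the most significant
   bit of the index: amplitude 2^{-r/2} iff the last n-r bits are 0. *)
Definition target_state (n r : nat) : Vec :=
  fun i => if Nat.eqb (Nat.modulo i (2 ^ (n - r))) 0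
           then RtoC (/ sqrt (2 ^ r)) else C0.

Definition perm_on (D : nat) (s : nat -> nat) : Prop :=
  (forall i, (i < D)%nat -> (s i < D)%nat) /\
  (forall i j, (i < D)%nat -> (j < D)%nat -> s i = s j -> i = j).

Definition log2 (x : R) : R := ln x / ln 2.
(* -x log2 x with the convention 0 log 0 = 0 *)
Definition negxlogx (x : R) : R := if Rle_dec x 0 then 0 else - x * log2 x.
Definition R_I_qubit (alpha beta : Cx) : R :=
  negxlogx (Cnorm2 alpha) + negxlogx (Cnorm2 beta).

(* Group the 2^n basis vectors by Hamming weight k: within a type class all amplitudes of
   |psi>^n have modulus sqrt(|alpha|^(2(n-k)) |beta|^(2k)), so after undoing the phases each
   class is a uniform superposition of C(n,k) basis vectors.  Splitting the class along the
   binary expansion of C(n,k) into blocks of size 2^t, and mapping each block onto the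
   multiples of 2^(n-t), yields an incoherent measurement whose outcomes are exactly
   |Psi_2>^t (x) |0...0>.  On a class of size C the greedy binary decomposition yields on
   average at least log2 C - 3 copies, and with p_k the probability of class k,
   sum_k p_k log2 C(n,k) = n R - H(p) >= n R - log2 (n+1), whence the rate. *)

From Pilot Require Import Defs.
From Stdlib Require Import Reals Arith Bool Lra Lia Classical.
Open Scope R_scope.
Open Scope bool_scope.

Lemma Rsum_ext f g N : (forall i, (i < N)%nat -> f i = g i) -> Rsum f N = Rsum g N.
Proof.
  induction N as [|N IH]; intros Hfg; simpl; [reflexivity|].
  rewrite IH, (Hfg N) by (intros; try apply Hfg; lia); reflexivity.
Qed.

Lemma Rsum_zero f N : (forall i, (i < N)%nat -> f i = 0) -> Rsum f N = 0.
Proof.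
  induction N as [|N IH]; intros Hf; simpl; [reflexivity|].
  rewrite IH, (Hf N) by (intros; try apply Hf; lia); ring.
Qed.

Lemma Rsum_single f N y : (y < N)%nat -> (forall x, (x < N)%nat -> x <> y -> f x = 0) ->
  Rsum f N = f y.
Proof.
  induction N as [|N IH]; intros Hy Hf; [lia|]; simpl.
  destruct (Nat.eq_dec y N) as [->|Hne].
  - rewrite Rsum_zero by (intros; apply Hf; lia); ring.
  - rewrite IH, (Hf N) by (auto; lia); ring.
Qed.

Lemma Rsum_plus f g N : Rsum (fun i => f i + g i) N = Rsum f N + Rsum g N.
Proof. induction N as [|N IH]; simpl; [ring|]; rewrite IH; ring. Qed.

Lemma Rsum_minus f g N : Rsum (fun i => f i - g i) N = Rsum f N - Rsum g N.
Proof. induction N as [|N IH]; simpl; [ring|]; rewrite IH; ring. Qed.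

Lemma Rsum_scal c f N : Rsum (fun i => c * f i) N = c * Rsum f N.
Proof. induction N as [|N IH]; simpl; [ring|]; rewrite IH; ring. Qed.

Lemma Rsum_const c N : Rsum (fun _ => c) N = INR N * c.
Proof. induction N as [|N IH]; [simpl; ring|]; rewrite S_INR; simpl; rewrite IH; ring. Qed.

Lemma Rsum_le f g N : (forall i, (i < N)%nat -> f i <= g i) -> Rsum f N <= Rsum g N.
Proof.
  induction N as [|N IH]; intros Hfg; simpl; [lra|].
  apply Rplus_le_compat; [apply IH; intros; apply Hfg|apply Hfg]; lia.
Qed.

Lemma Rsum_add_range f a b : Rsum f (a + b) = Rsum f a + Rsum (fun i => f (a + i)%nat) b.
Proof.
  induction b as [|b IH]; simpl; [rewrite Nat.add_0_r; ring|].
  rewrite Nat.add_succ_r; simpl; rewrite IH; ring.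
Qed.

Lemma Rsum_swap (f : nat -> nat -> R) M N :
  Rsum (fun j => Rsum (f j) N) M = Rsum (fun x => Rsum (fun j => f j x) M) N.
Proof.
  induction M as [|M IH]; simpl; [symmetry; apply Rsum_zero; reflexivity|].
  rewrite IH, <- Rsum_plus; reflexivity.
Qed.

Lemma Csum_components f N :
  Csum f N = (Rsum (fun i => fst (f i)) N, Rsum (fun i => snd (f i)) N).
Proof. induction N as [|N IH]; simpl; [reflexivity|]; rewrite IH; reflexivity. Qed.

Lemma Csum_ext f g N : (forall i, (i < N)%nat -> f i = g i) -> Csum f N = Csum g N.
Proof. intros Hfg; rewrite !Csum_components; f_equal; apply Rsum_ext; intros; rewrite Hfg; auto. Qed.

Lemma Csum_zero f N : (forall i, (i < N)%nat -> f i = C0) -> Csum f N = C0.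
Proof.
  intros Hf; rewrite Csum_components.
  unfold C0, RtoC; f_equal; apply Rsum_zero; intros i Hi; rewrite Hf; auto.
Qed.

Lemma Csum_single f N y : (y < N)%nat -> (forall x, (x < N)%nat -> x <> y -> f x = C0) ->
  Csum f N = f y.
Proof.
  intros Hy Hf; rewrite Csum_components, !(Rsum_single _ N y) by
    (auto; intros x Hx Hxy; rewrite Hf; auto).
  destruct (f y); reflexivity.
Qed.

Lemma Cnorm2_C0 : Cnorm2 C0 = 0.
Proof. unfold Cnorm2, C0, RtoC; simpl; ring. Qed.

Lemma Cnorm2_Csum_sparse f N :
  (forall x y, (x < N)%nat -> (y < N)%nat -> f x <> C0 -> f y <> C0 -> x = y) ->
  Cnorm2 (Csum f N) = Rsum (fun x => Cnorm2 (f x)) N.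
Proof.
  intros Hsparse.
  destruct (classic (exists y, (y < N)%nat /\ f y <> C0)) as [[y [Hy Hfy]]|Hnone].
  - assert (Hother : forall x, (x < N)%nat -> x <> y -> f x = C0).
    { intros x Hx Hxy; apply NNPP; intros Hfx; apply Hxy, Hsparse; auto. }
    rewrite (Csum_single f N y), (Rsum_single _ N y); auto.
    intros x Hx Hxy; rewrite Hother, Cnorm2_C0; auto.
  - assert (Hzero : forall x, (x < N)%nat -> f x = C0).
    { intros x Hx; apply NNPP; intros Hfx; apply Hnone; eauto. }
    rewrite Csum_zero, Rsum_zero, Cnorm2_C0; auto.
    intros x Hx; rewrite Hzero, Cnorm2_C0; auto.
Qed.

Section ClassRank.
Variable f : nat -> nat.

Fixpoint class_size (k N : nat) : nat :=
  match N with
  | O => O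
  | S N' => (class_size k N' + if Nat.eqb (f N') k then 1 else 0)%nat
  end.

Definition class_rank (x : nat) : nat := class_size (f x) x.

Lemma class_size_mono k N M : (N <= M)%nat -> (class_size k N <= class_size k M)%nat.
Proof. induction 1; simpl; lia. Qed.

Lemma class_size_le k N : (class_size k N <= N)%nat.
Proof. induction N; simpl; [|destruct (Nat.eqb _ _)]; lia. Qed.

Lemma class_rank_lt x N : (x < N)%nat -> (class_rank x < class_size (f x) N)%nat.
Proof.
  intros Hx; apply Nat.lt_le_trans with (class_size (f x) (S x)); [|now apply class_size_mono].
  unfold class_rank; simpl; rewrite Nat.eqb_refl; lia.
Qed.

Lemma class_rank_inj x y : f x = f y -> class_rank x = class_rank y -> x = y.
Proof.
  assert (Hlt : forall x y, f x = f y -> (x < y)%nat -> (class_rank x < class_rank y)%nat).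
  { intros u v Huv Hlt; unfold class_rank; rewrite <- Huv.
    apply (class_rank_lt u v) in Hlt; exact Hlt. }
  intros Hf Hr; destruct (Nat.lt_trichotomy x y) as [H|[H|H]]; auto.
  - specialize (Hlt x y Hf H); lia.
  - specialize (Hlt y x (eq_sym Hf) H); lia.
Qed.

Lemma class_rank_surj k r N : (r < class_size k N)%nat ->
  exists x, (x < N)%nat /\ f x = k /\ class_rank x = r.
Proof.
  induction N as [|N IH]; simpl; [lia|]; intros Hr.
  destruct (Nat.lt_ge_cases r (class_size k N)) as [Hlt|Hge].
  - destruct (IH Hlt) as [x [Hx Hxk]]; exists x; split; [lia|exact Hxk].
  - destruct (Nat.eqb_spec (f N) k) as [HN|HN]; [|lia].
    exists N; unfold class_rank; rewrite HN; split; lia.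
Qed.

Lemma Rsum_class k (F : nat -> R) N :
  Rsum (fun x => if Nat.eqb (f x) k then F (class_rank x) else 0) N = Rsum F (class_size k N).
Proof.
  induction N as [|N IH]; [reflexivity|]; simpl; rewrite IH.
  unfold class_rank; destruct (Nat.eqb_spec (f N) k) as [->|_].
  - rewrite Nat.add_1_r; simpl; reflexivity.
  - rewrite Nat.add_0_r; ring.
Qed.

Lemma Rsum_classes K N (g : nat -> R) (G : nat -> nat -> R) :
  (forall x, (x < N)%nat -> (f x < K)%nat) ->
  (forall x, (x < N)%nat -> g x = G (f x) (class_rank x)) ->
  Rsum g N = Rsum (fun k => Rsum (G k) (class_size k N)) K.
Proof.
  intros HfK Hg.
  transitivity (Rsum (fun x => Rsum (fun k => if Nat.eqb (f x) k then G k (class_rank x) else 0) K) N).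
  - apply Rsum_ext; intros x Hx.
    rewrite (Rsum_single _ K (f x)), Nat.eqb_refl; auto.
    intros k _ Hk; apply not_eq_sym, Nat.eqb_neq in Hk; now rewrite Hk.
  - rewrite <- Rsum_swap; apply Rsum_ext; intros k _.
    rewrite <- Rsum_class; reflexivity.
Qed.

End ClassRank.

Section DyadicBlocks.
Local Open Scope nat_scope.

Fixpoint block_exp (T C r : nat) : nat :=
  match T with
  | O => O
  | S T' =>
      if 2 ^ T <=? C then (if r <? 2 ^ T then T else block_exp T' (C - 2 ^ T) (r - 2 ^ T))
      else block_exp T' C r
  end.

Fixpoint block_pos (T C r : nat) : nat :=
  match T with
  | O => r
  | S T' =>
      if 2 ^ T <=? C then (if r <? 2 ^ T then r else block_pos T' (C - 2 ^ T) (r - 2 ^ T))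
      else block_pos T' C r
  end.

Lemma block_exp_S T C r : block_exp (S T) C r =
  if 2 ^ S T <=? C then (if r <? 2 ^ S T then S T else block_exp T (C - 2 ^ S T) (r - 2 ^ S T))
  else block_exp T C r.
Proof. reflexivity. Qed.

Lemma block_pos_S T C r : block_pos (S T) C r =
  if 2 ^ S T <=? C then (if r <? 2 ^ S T then r else block_pos T (C - 2 ^ S T) (r - 2 ^ S T))
  else block_pos T C r.
Proof. reflexivity. Qed.

Lemma block_exp_le T C r : block_exp T C r <= T.
Proof.
  revert C r; induction T as [|T IH]; intros C r; [simpl; lia|]; rewrite block_exp_S.
  destruct (2 ^ S T <=? C); [destruct (r <? 2 ^ S T)|];
    [lia|specialize (IH (C - 2 ^ S T) (r - 2 ^ S T))|specialize (IH C r)]; lia.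
Qed.

Lemma pow2_S_split T : 2 ^ S (S T) = 2 ^ S T + 2 ^ S T.
Proof. simpl; lia. Qed.

Lemma block_pos_lt T C r : r < C -> C < 2 ^ S T -> block_pos T C r < 2 ^ block_exp T C r.
Proof.
  revert C r; induction T as [|T IH]; intros C r Hr HC; [simpl in *; lia|].
  rewrite block_pos_S, block_exp_S; rewrite pow2_S_split in HC.
  destruct (Nat.leb_spec (2 ^ S T) C); [destruct (Nat.ltb_spec r (2 ^ S T))|];
    [lia|apply IH|apply IH]; lia.
Qed.

Lemma block_inj T C r1 r2 : r1 < C -> r2 < C -> C < 2 ^ S T ->
  block_exp T C r1 = block_exp T C r2 -> block_pos T C r1 = block_pos T C r2 -> r1 = r2.
Proof.
  revert C r1 r2; induction T as [|T IH]; intros C r1 r2 H1 H2 HC; [simpl in *; lia|].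
  rewrite !block_pos_S, !block_exp_S; rewrite pow2_S_split in HC.
  pose proof (block_exp_le T (C - 2 ^ S T) (r1 - 2 ^ S T)).
  pose proof (block_exp_le T (C - 2 ^ S T) (r2 - 2 ^ S T)).
  destruct (Nat.leb_spec (2 ^ S T) C);
    [destruct (Nat.ltb_spec r1 (2 ^ S T)), (Nat.ltb_spec r2 (2 ^ S T))|]; intros Hb Hp; try lia.
  - assert (r1 - 2 ^ S T = r2 - 2 ^ S T) by (apply (IH (C - 2 ^ S T)); auto; lia); lia.
  - apply (IH C); auto; lia.
Qed.

Lemma block_surj T C r0 q : r0 < C -> C < 2 ^ S T -> q < 2 ^ block_exp T C r0 ->
  exists r, r < C /\ block_exp T C r = block_exp T C r0 /\ block_pos T C r = q.
Proof.
  revert C r0 q; induction T as [|T IH]; intros C r0 q Hr0 HC Hq; [simpl in *; exists r0; lia|].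
  rewrite block_exp_S in Hq; rewrite pow2_S_split in HC.
  destruct (Nat.leb_spec (2 ^ S T) C) as [Hbig|Hsmall];
    [destruct (Nat.ltb_spec r0 (2 ^ S T)) as [Hfirst|Hrest]|].
  - exists q; rewrite !block_exp_S, block_pos_S.
    rewrite (proj2 (Nat.leb_le _ _) Hbig), (proj2 (Nat.ltb_lt _ _) Hfirst),
      (proj2 (Nat.ltb_lt q _)) by lia; lia.
  - destruct (IH (C - 2 ^ S T) (r0 - 2 ^ S T) q) as [r [Hr [Hrb Hrp]]]; try lia.
    exists (2 ^ S T + r); rewrite !block_exp_S, block_pos_S.
    rewrite (proj2 (Nat.leb_le _ _) Hbig), (proj2 (Nat.ltb_ge _ _) Hrest),
      (proj2 (Nat.ltb_ge (2 ^ S T + r) _)), Nat.add_comm, Nat.add_sub by lia; lia.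
  - destruct (IH C r0 q) as [r [Hr [Hrb Hrp]]]; try lia.
    exists r; rewrite !block_exp_S, block_pos_S, (proj2 (Nat.leb_gt _ _) Hsmall); auto.
Qed.

End DyadicBlocks.

Lemma ln_le_sub1 x : 0 < x -> ln x <= x - 1.
Proof. intros Hx; pose proof (exp_ineq1_le (ln x)); rewrite exp_ln in *; lra. Qed.

Lemma ln2_pos : 0 < ln 2.
Proof. pose proof ln_lt_2; lra. Qed.

Lemma inv_ln2_lt_2 : / ln 2 < 2.
Proof.
  pose proof ln_lt_2 as H.
  apply Rinv_lt_contravar in H; [rewrite Rinv_inv in H; exact H|].
  apply Rmult_lt_0_compat; lra.
Qed.

Lemma log2_1 : log2 1 = 0.
Proof. unfold log2; rewrite ln_1; lra. Qed.

Lemma log2_pow2 k : log2 (2 ^ k) = INR k.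
Proof. unfold log2; rewrite ln_pow by lra; field; apply Rgt_not_eq, ln2_pos. Qed.

Lemma log2_lt_pow2 x k : 0 < x -> x < 2 ^ k -> log2 x < INR k.
Proof.
  intros Hx Hk; rewrite <- log2_pow2; unfold log2, Rdiv.
  apply Rmult_lt_compat_r; [apply Rinv_0_lt_compat, ln2_pos|apply ln_increasing; lra].
Qed.

Lemma INR_pow2 k : INR (2 ^ k) = 2 ^ k.
Proof. rewrite pow_INR; reflexivity. Qed.

Lemma log2_deficit_le T c : 0 <= c -> c <= 2 ^ T -> c * (INR T + 1 - log2 c) <= 2 * 2 ^ T.
Proof.
  intros [Hc|<-] HcX; [|pose proof (pow_lt 2 T); lra].
  set (X := 2 ^ T) in *; assert (HX : 0 < X) by (apply pow_lt; lra).
  pose proof ln2_pos as Hln2; pose proof inv_ln2_lt_2 as Hinv.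
  assert (Hgap : c * (ln X - ln c) <= X - c).
  { assert (Hq : 0 < X * / c) by (apply Rmult_lt_0_compat; [|apply Rinv_0_lt_compat]; lra).
    pose proof (ln_le_sub1 _ Hq) as H.
    rewrite ln_mult, ln_Rinv in H by (try apply Rinv_0_lt_compat; lra).
    replace (X - c) with (c * (X * / c - 1)) by (field; lra).
    apply Rmult_le_compat_l; lra. }
  assert (HT : INR T = ln X / ln 2) by (unfold X; rewrite ln_pow by lra; field; lra).
  assert (Hdef : c * (INR T - log2 c) = c * (ln X - ln c) * / ln 2)
    by (rewrite HT; unfold log2; field; lra).
  assert (0 < / ln 2) by (apply Rinv_0_lt_compat; lra).
  assert (c * (ln X - ln c) * / ln 2 <= (X - c) * / ln 2) by (apply Rmult_le_compat_r; lra).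
  nra.
Qed.

(* Peeling off the top block 2^T leaves C - 2^T < 2^T elements, whose loss against
   log2 C is absorbed by [log2_deficit_le]. *)
Lemma Rsum_block_exp_ge T C : (C < 2 ^ S T)%nat ->
  INR C * (log2 (INR C) - 3) <= Rsum (fun r => INR (block_exp T C r)) C.
Proof.
  revert C; induction T as [|T IH]; intros C HC.
  - simpl in HC; destruct C as [|[|]]; simpl; [lra| |lia].
    rewrite log2_1; lra.
  - destruct (Nat.leb_spec (2 ^ S T) C) as [Hbig|Hsmall].
    + set (C' := (C - 2 ^ S T)%nat); set (X := 2 ^ S T).
      assert (HCdec : C = (2 ^ S T + C')%nat) by (unfold C'; lia).
      assert (HC' : (C' < 2 ^ S T)%nat) by (unfold C'; rewrite pow2_S_split in HC; lia).
      rewrite HCdec at 3; rewrite Rsum_add_range.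
      rewrite (Rsum_ext _ (fun _ => INR (S T))), Rsum_const.
      2:{ intros r Hr; rewrite block_exp_S, (proj2 (Nat.leb_le _ _) Hbig),
            (proj2 (Nat.ltb_lt _ _) Hr); reflexivity. }
      rewrite (Rsum_ext _ (fun r => INR (block_exp T C' r))).
      2:{ intros r Hr; rewrite block_exp_S, (proj2 (Nat.leb_le _ _) Hbig),
            (proj2 (Nat.ltb_ge (2 ^ S T + r) _)), Nat.add_comm, Nat.add_sub by lia; reflexivity. }
      pose proof (IH C' HC') as HIH.
      assert (HXpos : 0 < X) by (apply pow_lt; lra).
      assert (HC'X : INR C' <= X) by (unfold X; rewrite <- INR_pow2; apply le_INR; lia).
      assert (HCr : INR C = X + INR C') by (rewrite HCdec, plus_INR, INR_pow2; reflexivity).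
      assert (Hlog : log2 (INR C) < INR (S (S T))).
      { apply log2_lt_pow2; [rewrite HCr; pose proof (pos_INR C'); lra|].
        rewrite <- INR_pow2; apply lt_INR; exact HC. }
      pose proof (log2_deficit_le (S T) (INR C') (pos_INR C') HC'X) as Hdef; fold X in Hdef.
      rewrite INR_pow2; fold X.
      assert (INR C * (log2 (INR C) - 3) <= INR C * (INR (S T) - 2))
        by (apply Rmult_le_compat_l; [apply pos_INR|rewrite !S_INR in *; lra]).
      rewrite HCr in *; nra.
    + rewrite (Rsum_ext _ (fun r => INR (block_exp T C r))); [apply IH; lia|].
      intros r _; rewrite block_exp_S, (proj2 (Nat.leb_gt _ _) Hsmall); reflexivity.
Qed.

Lemma negxlogx_0 : negxlogx 0 = 0.
Proof. unfold negxlogx; destruct (Rle_dec 0 0); lra. Qed.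

Lemma negxlogx_pos x : 0 < x -> negxlogx x = - x * log2 x.
Proof. intros Hx; unfold negxlogx; destruct (Rle_dec x 0); lra. Qed.

Lemma negxlogx_mul a b : 0 <= a -> 0 <= b -> negxlogx (a * b) = a * negxlogx b + b * negxlogx a.
Proof.
  intros [Ha|<-] [Hb|<-]; rewrite ?Rmult_0_l, ?Rmult_0_r, ?negxlogx_0; try ring.
  rewrite !negxlogx_pos by (try apply Rmult_lt_0_compat; auto).
  unfold log2; rewrite ln_mult by auto; field; apply Rgt_not_eq, ln2_pos.
Qed.

(* Tangent-line bound of -p log p at p = 1/N. *)
Lemma negxlogx_le_tangent p N : (1 <= N)%nat -> 0 <= p ->
  negxlogx p <= p * log2 (INR N) + (/ INR N - p) / ln 2.
Proof.
  intros HN Hp; pose proof ln2_pos.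
  assert (HNr : 1 <= INR N) by (apply (le_INR 1); auto).
  assert (Hk : 0 < / ln 2) by (apply Rinv_0_lt_compat; lra).
  destruct Hp as [Hp|<-].
  - rewrite negxlogx_pos by auto; unfold log2.
    assert (Hq : 0 < / (INR N * p)) by (apply Rinv_0_lt_compat; nra).
    pose proof (ln_le_sub1 _ Hq) as Hln.
    rewrite ln_Rinv, ln_mult in Hln by (try apply Rinv_0_lt_compat; nra).
    assert (Hnat : - p * ln p <= p * ln (INR N) + (/ INR N - p)).
    { assert (p * (- (ln (INR N) + ln p)) <= p * (/ (INR N * p) - 1))
        by (apply Rmult_le_compat_l; lra).
      replace (p * (/ (INR N * p) - 1)) with (/ INR N - p) in * by (field; lra); lra. }
    unfold Rdiv; apply (Rmult_le_compat_r (/ ln 2)) in Hnat; [|lra].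
    replace (- p * (ln p * / ln 2)) with (- p * ln p * / ln 2) by ring.
    replace (p * (ln (INR N) * / ln 2) + (/ INR N - p) * / ln 2)
      with ((p * ln (INR N) + (/ INR N - p)) * / ln 2) by ring; exact Hnat.
  - rewrite negxlogx_0; assert (0 < / INR N) by (apply Rinv_0_lt_compat; lra).
    unfold Rdiv; nra.
Qed.

Lemma entropy_le_log2_card (p : nat -> R) N : (1 <= N)%nat ->
  (forall k, (k < N)%nat -> 0 <= p k) -> Rsum p N = 1 ->
  Rsum (fun k => negxlogx (p k)) N <= log2 (INR N).
Proof.
  intros HN Hp Hsum.
  eapply Rle_trans; [apply (Rsum_le _ (fun k => log2 (INR N) * p k + / ln 2 * (/ INR N - p k)));
    intros k Hk; rewrite Rmult_comm, (Rmult_comm (/ ln 2)); apply negxlogx_le_tangent; auto|].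
  rewrite Rsum_plus, !Rsum_scal, Rsum_minus, Rsum_const, Hsum.
  assert (1 <= INR N) by (apply (le_INR 1); auto).
  replace (INR N * / INR N) with 1 by (field; lra); lra.
Qed.

Lemma eventually_log2_le_linear eps c : 0 < eps ->
  exists n0 : nat, forall n, (n0 <= n)%nat -> log2 (INR (S n)) + c <= INR n * eps.
Proof.
  intros Heps; set (t := 4 / eps).
  assert (Ht : 0 < t) by (unfold t; apply Rdiv_lt_0_compat; lra).
  destruct (INR_archimed (eps / 2) (eps / 2 + 2 * ln t + c)) as [n0 Hn0]; [lra|].
  exists n0; intros n Hn.
  assert (Hn0n : INR n0 * (eps / 2) <= INR n * (eps / 2))
    by (apply Rmult_le_compat_r; [lra|apply le_INR; auto]).
  set (y := INR (S n)); assert (Hy : 1 <= y) by (unfold y; rewrite S_INR; pose proof (pos_INR n); lra).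
  assert (Hlny : 0 <= ln y)
    by (destruct Hy as [Hy|<-]; [rewrite <- ln_1; left; apply ln_increasing|rewrite ln_1]; lra).
  assert (Hlog : log2 y <= 2 * ln y).
  { unfold log2, Rdiv; pose proof inv_ln2_lt_2; nra. }
  assert (Hlin : ln y <= eps * y / 4 - 1 + ln t).
  { assert (Hq : 0 < y * / t) by (apply Rmult_lt_0_compat; [|apply Rinv_0_lt_compat]; lra).
    pose proof (ln_le_sub1 _ Hq) as H.
    rewrite ln_mult, ln_Rinv in H by (try apply Rinv_0_lt_compat; lra).
    replace (y * / t) with (eps * y / 4) in H by (unfold t; field; lra); lra. }
  unfold y in *; rewrite S_INR in *; lra.
Qed.

Lemma mul_log2_eq_negxlogx c w : 0 <= c -> 0 <= w ->
  w * (c * log2 c) = c * negxlogx w - negxlogx (c * w).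
Proof.
  intros [Hc|<-] Hw; [|rewrite !Rmult_0_l, negxlogx_0; ring].
  rewrite negxlogx_mul, (negxlogx_pos c) by lra; ring.
Qed.

Lemma Cmul_C0_l z : Cmul C0 z = C0.
Proof. destruct z; unfold Cmul, C0, RtoC; simpl; f_equal; ring. Qed.

Lemma Cmul_C0_r z : Cmul z C0 = C0.
Proof. destruct z; unfold Cmul, C0, RtoC; simpl; f_equal; ring. Qed.

Lemma Cconj_C0 : Cconj C0 = C0.
Proof. unfold Cconj, C0, RtoC; simpl; f_equal; ring. Qed.

Lemma Cnorm2_mul z w : Cnorm2 (Cmul z w) = Cnorm2 z * Cnorm2 w.
Proof. destruct z, w; unfold Cnorm2, Cmul; simpl; ring. Qed.

Lemma Cnorm2_nonneg z : 0 <= Cnorm2 z.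
Proof. destruct z; unfold Cnorm2; simpl; nra. Qed.

Lemma Cnorm2_RtoC_sqrt w : 0 <= w -> Cnorm2 (RtoC (sqrt w)) = w.
Proof. intros Hw; unfold Cnorm2, RtoC; simpl; rewrite sqrt_sqrt by auto; ring. Qed.

Definition dephase (z : Cx) : Cx :=
  if Req_dec_T (Cnorm2 z) 0 then Defs.C1 else Cmul (RtoC (/ sqrt (Cnorm2 z))) (Cconj z).

Lemma dephase_mul z : Cmul (dephase z) z = RtoC (sqrt (Cnorm2 z)).
Proof.
  destruct z as [u v]; unfold dephase, Cnorm2, Cmul, Cconj, Defs.C1, RtoC; simpl.
  destruct (Req_dec_T (u * u + v * v) 0) as [E|E].
  - assert (u = 0) by nra; assert (v = 0) by nra; subst; rewrite E, sqrt_0; f_equal; ring.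
  - assert (Hpos : 0 < u * u + v * v) by (destruct (Cnorm2_nonneg (u, v)); unfold Cnorm2 in *; simpl in *; lra).
    pose proof (sqrt_lt_R0 _ Hpos); pose proof (sqrt_sqrt _ (Rlt_le _ _ Hpos)).
    simpl; f_equal; [|field; lra].
    apply (Rmult_eq_reg_l (sqrt (u * u + v * v))); [|lra]; field_simplify; lra.
Qed.

Lemma dephase_unit z : Cmul (Cconj (dephase z)) (dephase z) = Defs.C1.
Proof.
  destruct z as [u v]; unfold dephase, Cnorm2, Cmul, Cconj, Defs.C1, RtoC; simpl.
  destruct (Req_dec_T (u * u + v * v) 0) as [E|E]; simpl; [f_equal; ring|].
  assert (Hpos : 0 < u * u + v * v) by (destruct (Cnorm2_nonneg (u, v)); unfold Cnorm2 in *; simpl in *; lra).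
  pose proof (sqrt_lt_R0 _ Hpos) as Hs; pose proof (sqrt_sqrt _ (Rlt_le _ _ Hpos)) as Hss.
  simpl; f_equal; [|field; lra].
  transitivity ((u * u + v * v) / (sqrt (u * u + v * v) * sqrt (u * u + v * v))); [field; lra|].
  rewrite Hss; field; lra.
Qed.

Definition relabel_kraus (lab row : nat -> nat) (v : Vec) (j : nat) : Mat :=
  fun i x => if Nat.eqb (lab x) j && Nat.eqb (row x) i then dephase (v x) else C0.

Section RelabelKraus.
Variables (D m : nat) (lab row : nat -> nat) (v : Vec).
Hypothesis lab_lt : forall x, (x < D)%nat -> (lab x < m)%nat.
Hypothesis row_lt : forall x, (x < D)%nat -> (row x < D)%nat.
Hypothesis lab_row_inj : forall x y, (x < D)%nat -> (y < D)%nat ->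
  lab x = lab y -> row x = row y -> x = y.

Let K := relabel_kraus lab row v.

Lemma relabel_kraus_neq0 j i x :
  K j i x <> C0 -> lab x = j /\ row x = i.
Proof.
  unfold K, relabel_kraus; destruct (Nat.eqb_spec (lab x) j), (Nat.eqb_spec (row x) i);
    simpl; tauto.
Qed.

Lemma relabel_kraus_incoherent : incoherent_op D m K.
Proof.
  split.
  - intros x x' Hx Hx'; unfold Mmul, Madj.
    destruct (Nat.eqb_spec x x') as [<-|Hne].
    + rewrite (Csum_single _ m (lab x)); auto.
      * rewrite (Csum_single _ D (row x)); auto.
        -- unfold K, relabel_kraus; rewrite !Nat.eqb_refl; apply dephase_unit.
        -- intros i _ Hi; unfold K, relabel_kraus; rewrite (proj2 (Nat.eqb_neq _ _) (not_eq_sym Hi)).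
           rewrite andb_false_r, Cconj_C0, Cmul_C0_l; reflexivity.
      * intros j _ Hj; apply Csum_zero; intros i _.
        unfold K, relabel_kraus; rewrite (proj2 (Nat.eqb_neq _ _) (not_eq_sym Hj)).
        simpl; rewrite Cconj_C0, Cmul_C0_l; reflexivity.
    + apply Csum_zero; intros j _; apply Csum_zero; intros i _.
      destruct (classic (K j i x = C0)) as [E|E]; [rewrite E, Cconj_C0, Cmul_C0_l; reflexivity|].
      destruct (classic (K j i x' = C0)) as [E'|E']; [rewrite E', Cmul_C0_r; reflexivity|].
      apply relabel_kraus_neq0 in E as [], E' as []; exfalso; apply Hne, lab_row_inj; congruence.
  - intros j _ delta Hdelta i i' Hi Hi' Hii'; unfold Mmul at 1; apply Csum_zero; intros y Hy.
    unfold Mmul; rewrite (Csum_single _ D y Hy)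
      by (intros x Hx Hxy; rewrite (Hdelta x y Hx Hy Hxy); apply Cmul_C0_r).
    unfold Madj.
    destruct (classic (K j i y = C0)) as [E|E]; [rewrite E, !Cmul_C0_l; reflexivity|].
    destruct (classic (K j i' y = C0)) as [E'|E']; [rewrite E', Cconj_C0, Cmul_C0_r; reflexivity|].
    apply relabel_kraus_neq0 in E as [], E' as []; congruence.
Qed.

Lemma relabel_kraus_apply j i :
  Mapply D (K j) v i =
  Csum (fun x => if Nat.eqb (lab x) j && Nat.eqb (row x) i
                 then RtoC (sqrt (Cnorm2 (v x))) else C0) D.
Proof.
  unfold Mapply; apply Csum_ext; intros x _; unfold K, relabel_kraus.
  destruct (_ && _); [apply dephase_mul|apply Cmul_C0_l].
Qed.

Lemma relabel_kraus_apply_hit j x : (x < D)%nat -> lab x = j ->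
  Mapply D (K j) v (row x) = RtoC (sqrt (Cnorm2 (v x))).
Proof.
  intros Hx Hlab; rewrite relabel_kraus_apply, (Csum_single _ D x Hx).
  - rewrite Hlab, !Nat.eqb_refl; reflexivity.
  - intros y Hy Hyx; destruct (Nat.eqb_spec (lab y) j), (Nat.eqb_spec (row y) (row x)); simpl;
      auto; exfalso; apply Hyx, lab_row_inj; congruence.
Qed.

Lemma relabel_kraus_apply_miss j i : (forall x, (x < D)%nat -> lab x = j -> row x <> i) ->
  Mapply D (K j) v i = C0.
Proof.
  intros Hmiss; rewrite relabel_kraus_apply; apply Csum_zero; intros x Hx.
  destruct (Nat.eqb_spec (lab x) j), (Nat.eqb_spec (row x) i); simpl; auto.
  exfalso; eapply Hmiss; eauto.
Qed.

Lemma relabel_kraus_prob j :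
  Vnorm2 D (Mapply D (K j) v) = Rsum (fun x => if Nat.eqb (lab x) j then Cnorm2 (v x) else 0) D.
Proof.
  unfold Vnorm2.
  rewrite (Rsum_ext _ (fun i => Rsum (fun x => if Nat.eqb (lab x) j && Nat.eqb (row x) i
                                               then Cnorm2 (v x) else 0) D)).
  2:{ intros i _; rewrite relabel_kraus_apply, Cnorm2_Csum_sparse.
      - apply Rsum_ext; intros x _; destruct (_ && _);
          [apply Cnorm2_RtoC_sqrt, Cnorm2_nonneg|apply Cnorm2_C0].
      - intros x y Hx Hy Ex Ey.
        destruct (Nat.eqb_spec (lab x) j), (Nat.eqb_spec (row x) i); simpl in Ex; try tauto.
        destruct (Nat.eqb_spec (lab y) j), (Nat.eqb_spec (row y) i); simpl in Ey; try tauto.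
        apply lab_row_inj; congruence. }
  rewrite Rsum_swap; apply Rsum_ext; intros x Hx.
  rewrite (Rsum_single _ D (row x)); auto.
  - rewrite Nat.eqb_refl, andb_true_r; reflexivity.
  - intros i _ Hi; rewrite (proj2 (Nat.eqb_neq _ _) (not_eq_sym Hi)), andb_false_r; reflexivity.
Qed.

Lemma relabel_kraus_expectation (g : nat -> R) :
  Rsum (fun j => Vnorm2 D (Mapply D (K j) v) * g j) m = Rsum (fun x => Cnorm2 (v x) * g (lab x)) D.
Proof.
  rewrite (Rsum_ext _ (fun j => Rsum (fun x => if Nat.eqb (lab x) j then Cnorm2 (v x) * g j else 0) D)).
  2:{ intros j _; rewrite relabel_kraus_prob, Rmult_comm, <- Rsum_scal; apply Rsum_ext; intros x _.
      destruct (Nat.eqb (lab x) j); ring. }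
  rewrite Rsum_swap; apply Rsum_ext; intros x Hx.
  rewrite (Rsum_single _ m (lab x)); auto.
  - rewrite Nat.eqb_refl; reflexivity.
  - intros j _ Hj; rewrite (proj2 (Nat.eqb_neq _ _) (not_eq_sym Hj)); reflexivity.
Qed.

End RelabelKraus.

Fixpoint popcount (n x : nat) : nat :=
  match n with
  | O => O
  | S n' => ((if Nat.testbit x n' then 1 else 0) + popcount n' x)%nat
  end.

Lemma popcount_le n x : (popcount n x <= n)%nat.
Proof. induction n; simpl; [|destruct (Nat.testbit x n)]; lia. Qed.

Lemma testbit_lt_pow2 x n : (x < 2 ^ n)%nat -> Nat.testbit x n = false.
Proof. intros Hx; apply (Nat.testbit_unique x n false x 0); simpl; lia. Qed.

Lemma testbit_pow2_add x n : (x < 2 ^ n)%nat -> Nat.testbit (2 ^ n + x) n = true.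
Proof. intros Hx; apply (Nat.testbit_unique _ n true x 0); simpl; lia. Qed.

Lemma testbit_pow2_add_low x n j : (j < n)%nat -> Nat.testbit (2 ^ n + x) j = Nat.testbit x j.
Proof.
  intros Hj; rewrite <- (Nat.mod_pow2_bits_low (2 ^ n + x) n j), <- (Nat.mod_pow2_bits_low x n j) by auto.
  replace (2 ^ n + x)%nat with (x + 1 * 2 ^ n)%nat by lia; rewrite Nat.Div0.mod_add; reflexivity.
Qed.

Section QubitTensor.
Variables a b : Cx.

Lemma psi_tensor_low_bits n x y : (forall j, (j < n)%nat -> Nat.testbit x j = Nat.testbit y j) ->
  psi_tensor a b n x = psi_tensor a b n y.
Proof.
  induction n as [|n IH]; intros Hxy; simpl; [reflexivity|].
  rewrite (Hxy n), IH by (auto; intros; apply Hxy; lia); reflexivity.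
Qed.

Lemma Cnorm2_psi_tensor n x :
  Cnorm2 (psi_tensor a b n x) = Cnorm2 a ^ (n - popcount n x) * Cnorm2 b ^ popcount n x.
Proof.
  induction n as [|n IH]; [simpl; unfold Cnorm2, Defs.C1, RtoC; simpl; ring|].
  cbn [psi_tensor popcount]; rewrite Cnorm2_mul, IH; pose proof (popcount_le n x).
  destruct (Nat.testbit x n); [simpl; ring|].
  rewrite Nat.add_0_l, Nat.sub_succ_l by auto; simpl; ring.
Qed.

Lemma Rsum_psi_tensor_S (F : Cx -> R) n :
  Rsum (fun x => F (psi_tensor a b (S n) x)) (2 ^ S n) =
  Rsum (fun x => F (Cmul a (psi_tensor a b n x))) (2 ^ n) +
  Rsum (fun x => F (Cmul b (psi_tensor a b n x))) (2 ^ n).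
Proof.
  replace (2 ^ S n)%nat with (2 ^ n + 2 ^ n)%nat by (simpl; lia); rewrite Rsum_add_range.
  f_equal; apply Rsum_ext; intros x Hx; simpl.
  - rewrite testbit_lt_pow2; auto.
  - rewrite testbit_pow2_add, (psi_tensor_low_bits n (2 ^ n + x) x); auto.
    intros; apply testbit_pow2_add_low; auto.
Qed.

Hypothesis normalized : Cnorm2 a + Cnorm2 b = 1.

Lemma Rsum_Cnorm2_psi_tensor n : Rsum (fun x => Cnorm2 (psi_tensor a b n x)) (2 ^ n) = 1.
Proof.
  induction n as [|n IH]; [simpl; unfold Cnorm2, Defs.C1, RtoC; simpl; ring|].
  rewrite Rsum_psi_tensor_S.
  rewrite 2!(Rsum_ext (fun x => Cnorm2 (Cmul _ _)) _ _ (fun x _ => Cnorm2_mul _ _)).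
  rewrite !Rsum_scal, IH; lra.
Qed.

Lemma Rsum_negxlogx_psi_tensor n :
  Rsum (fun x => negxlogx (Cnorm2 (psi_tensor a b n x))) (2 ^ n) = INR n * R_I_qubit a b.
Proof.
  induction n as [|n IH].
  - simpl; unfold Cnorm2, Defs.C1, RtoC; simpl.
    replace (1 * 1 + 0 * 0) with 1 by ring; rewrite Rplus_0_l, negxlogx_pos, log2_1 by lra; ring.
  - rewrite (Rsum_psi_tensor_S (fun z => negxlogx (Cnorm2 z))), S_INR; cbv beta.
    assert (Hsplit : forall c x, negxlogx (Cnorm2 (Cmul c (psi_tensor a b n x))) =
      Cnorm2 c * negxlogx (Cnorm2 (psi_tensor a b n x)) + negxlogx (Cnorm2 c) * Cnorm2 (psi_tensor a b n x)).
    { intros c x; rewrite Cnorm2_mul, negxlogx_mul by apply Cnorm2_nonneg; ring. }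
    rewrite 2!(Rsum_ext (fun x => negxlogx (Cnorm2 (Cmul _ _))) _ _ (fun x _ => Hsplit _ x)).
    rewrite !Rsum_plus, !Rsum_scal, IH, Rsum_Cnorm2_psi_tensor.
    unfold R_I_qubit; nra.
Qed.

End QubitTensor.

Lemma Rsum_multiples M q c : (0 < M)%nat ->
  Rsum (fun i => if Nat.eqb (i mod M) 0 then c else 0) (q * M) = INR q * c.
Proof.
  intros HM; induction q as [|q IH]; [simpl; ring|].
  replace (S q * M)%nat with (q * M + M)%nat by lia; rewrite Rsum_add_range, IH, S_INR.
  rewrite (Rsum_single _ M 0); [|lia|].
  - rewrite Nat.add_0_r, Nat.Div0.mod_mul, Nat.eqb_refl; ring.
  - intros i Hi Hi0; rewrite Nat.add_comm, Nat.Div0.mod_add, Nat.mod_small by lia.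
    rewrite (proj2 (Nat.eqb_neq _ _) Hi0); reflexivity.
Qed.

Lemma Vnorm2_comb n t W (u : Vec) : (t <= n)%nat -> 0 <= W ->
  (forall i, (i < 2 ^ n)%nat -> u i = if Nat.eqb (i mod 2 ^ (n - t)) 0 then RtoC (sqrt W) else C0) ->
  Vnorm2 (2 ^ n) u = 2 ^ t * W.
Proof.
  intros Htn HW Hu; unfold Vnorm2.
  rewrite (Rsum_ext _ (fun i => if Nat.eqb (i mod 2 ^ (n - t)) 0 then W else 0)).
  - replace (2 ^ n)%nat with (2 ^ t * 2 ^ (n - t))%nat at 1
      by (rewrite <- Nat.pow_add_r; f_equal; lia).
    rewrite Rsum_multiples, INR_pow2; [reflexivity|].
    pose proof (Nat.pow_nonzero 2 (n - t)); lia.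
  - intros i Hi; rewrite Hu by auto; destruct (Nat.eqb _ 0);
      [apply Cnorm2_RtoC_sqrt; lra|apply Cnorm2_C0].
Qed.

Lemma normalized_comb n t W (u : Vec) : (t <= n)%nat -> 0 < W ->
  (forall i, (i < 2 ^ n)%nat -> u i = if Nat.eqb (i mod 2 ^ (n - t)) 0 then RtoC (sqrt W) else C0) ->
  forall i, (i < 2 ^ n)%nat -> Vscale (RtoC (/ sqrt (Vnorm2 (2 ^ n) u))) u i = target_state n t i.
Proof.
  intros Htn HW Hu i Hi; unfold Vscale, target_state.
  rewrite (Vnorm2_comb n t W u), Hu by (auto; lra); destruct (Nat.eqb _ 0); [|apply Cmul_C0_r].
  assert (HX : 0 < 2 ^ t) by (apply pow_lt; lra).
  rewrite sqrt_mult by lra; pose proof (sqrt_lt_R0 _ HX); pose proof (sqrt_lt_R0 _ HW).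
  unfold Cmul, RtoC; simpl; f_equal; field; lra.
Qed.

Section Distillation.
Variables (a b : Cx) (n : nat).

Definition type_weight (k : nat) : R := Cnorm2 a ^ (n - k) * Cnorm2 b ^ k.
Definition type_size (k : nat) : nat := class_size (popcount n) k (2 ^ n).
Definition type_rank (x : nat) : nat := class_rank (popcount n) x.
Definition distilled_copies (x : nat) : nat :=
  block_exp n (type_size (popcount n x)) (type_rank x).
Definition block_index (x : nat) : nat :=
  block_pos n (type_size (popcount n x)) (type_rank x).
Definition outcome (x : nat) : nat := (popcount n x * S n + distilled_copies x)%nat.
Definition target_row (x : nat) : nat := (block_index x * 2 ^ (n - distilled_copies x))%nat.
Definition distill_kraus : nat -> Mat := relabel_kraus outcome target_row (psi_tensor a b n).

Lemma type_size_lt k : (type_size k < 2 ^ S n)%nat.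
Proof.
  pose proof (class_size_le (popcount n) k (2 ^ n)); pose proof (Nat.pow_nonzero 2 n).
  unfold type_size; rewrite Nat.pow_succ_r'; lia.
Qed.

Lemma distilled_copies_le x : (distilled_copies x <= n)%nat.
Proof. apply block_exp_le. Qed.

Lemma block_index_lt x : (x < 2 ^ n)%nat -> (block_index x < 2 ^ distilled_copies x)%nat.
Proof. intros Hx; apply block_pos_lt; [apply class_rank_lt; auto|apply type_size_lt]. Qed.

Lemma outcome_lt x : (outcome x < S n * S n)%nat.
Proof. unfold outcome; pose proof (distilled_copies_le x); pose proof (popcount_le n x); nia. Qed.

Lemma outcome_div x : (outcome x / S n = popcount n x)%nat.
Proof.
  unfold outcome; pose proof (distilled_copies_le x).
  rewrite Nat.div_add_l, Nat.div_small; lia.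
Qed.

Lemma outcome_mod x : (outcome x mod S n = distilled_copies x)%nat.
Proof.
  unfold outcome; pose proof (distilled_copies_le x).
  rewrite Nat.add_comm, Nat.Div0.mod_add, Nat.mod_small; lia.
Qed.

Lemma target_row_lt x : (x < 2 ^ n)%nat -> (target_row x < 2 ^ n)%nat.
Proof.
  intros Hx; unfold target_row; pose proof (block_index_lt x Hx); pose proof (distilled_copies_le x).
  replace (2 ^ n)%nat with (2 ^ distilled_copies x * 2 ^ (n - distilled_copies x))%nat
    by (rewrite <- Nat.pow_add_r; f_equal; lia).
  apply Nat.mul_lt_mono_pos_r; auto; pose proof (Nat.pow_nonzero 2 (n - distilled_copies x)); lia.
Qed.

Lemma outcome_target_row_inj x y : (x < 2 ^ n)%nat -> (y < 2 ^ n)%nat ->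
  outcome x = outcome y -> target_row x = target_row y -> x = y.
Proof.
  intros Hx Hy Ho Hr.
  assert (Hpop : popcount n x = popcount n y) by (rewrite <- !outcome_div; congruence).
  assert (Hcop : distilled_copies x = distilled_copies y) by (rewrite <- !outcome_mod; congruence).
  unfold target_row in Hr; rewrite Hcop in Hr.
  apply Nat.mul_cancel_r in Hr; [|apply Nat.pow_nonzero; lia].
  apply (class_rank_inj (popcount n)); auto.
  unfold distilled_copies, block_index in *; rewrite Hpop in *.
  apply (block_inj n (type_size (popcount n y))); auto; [rewrite <- Hpop| |];
    first [apply class_rank_lt; auto | apply type_size_lt].
Qed.

Lemma target_row_hits x0 i : (x0 < 2 ^ n)%nat -> (i < 2 ^ n)%nat ->
  (i mod 2 ^ (n - distilled_copies x0) = 0)%nat ->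
  exists x, (x < 2 ^ n)%nat /\ outcome x = outcome x0 /\ target_row x = i.
Proof.
  intros Hx0 Hi Hmod; set (t := distilled_copies x0) in *; set (k := popcount n x0).
  assert (Ht : (t <= n)%nat) by apply distilled_copies_le.
  set (q := (i / 2 ^ (n - t))%nat).
  assert (Hiq : i = (q * 2 ^ (n - t))%nat)
    by (pose proof (Nat.div_mod_eq i (2 ^ (n - t))); unfold q; lia).
  assert (Hq : (q < 2 ^ t)%nat).
  { apply Nat.Div0.div_lt_upper_bound.
    rewrite <- Nat.pow_add_r; replace (n - t + t)%nat with n by lia; auto. }
  destruct (block_surj n (type_size k) (type_rank x0) q) as [r [Hr [Hrexp Hrpos]]];
    [apply class_rank_lt; auto|apply type_size_lt|exact Hq|].
  destruct (class_rank_surj (popcount n) k r (2 ^ n) Hr) as [x [Hx [Hxk Hxr]]].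
  exists x; unfold outcome, target_row, distilled_copies, block_index, type_rank in *.
  fold k; rewrite Hxk, Hxr, Hrexp, Hrpos; auto.
Qed.

Lemma Cnorm2_psi_tensor_type x : Cnorm2 (psi_tensor a b n x) = type_weight (popcount n x).
Proof. apply Cnorm2_psi_tensor. Qed.

Lemma distill_kraus_incoherent : incoherent_op (2 ^ n) (S n * S n) distill_kraus.
Proof.
  apply relabel_kraus_incoherent;
    [intros; apply outcome_lt|apply target_row_lt|apply outcome_target_row_inj].
Qed.

Lemma distill_kraus_output j x0 i : (x0 < 2 ^ n)%nat -> outcome x0 = j -> (i < 2 ^ n)%nat ->
  Mapply (2 ^ n) (distill_kraus j) (psi_tensor a b n) i =
  if Nat.eqb (i mod 2 ^ (n - j mod S n)) 0 then RtoC (sqrt (type_weight (j / S n))) else C0.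
Proof.
  intros Hx0 Hj Hi; rewrite <- Hj, outcome_mod, outcome_div.
  destruct (Nat.eqb_spec (i mod 2 ^ (n - distilled_copies x0)) 0) as [Hmod|Hmod].
  - destruct (target_row_hits x0 i Hx0 Hi Hmod) as [x [Hx [Hxo <-]]].
    unfold distill_kraus; rewrite (relabel_kraus_apply_hit (2 ^ n) outcome target_row) with (x := x);
      auto using outcome_target_row_inj.
    rewrite Cnorm2_psi_tensor_type, <- (outcome_div x), <- (outcome_div x0), Hxo; reflexivity.
  - apply relabel_kraus_apply_miss; auto using outcome_target_row_inj.
    intros x Hx Hxo <-; apply Hmod.
    rewrite <- (outcome_mod x0), <- Hxo, outcome_mod; unfold target_row; apply Nat.Div0.mod_mul.
Qed.

Lemma distill_kraus_target j :
  let p := Vnorm2 (2 ^ n) (Mapply (2 ^ n) (distill_kraus j) (psi_tensor a b n)) in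
  0 < p -> forall i, (i < 2 ^ n)%nat ->
  Vscale (RtoC (/ sqrt p)) (Mapply (2 ^ n) (distill_kraus j) (psi_tensor a b n)) i =
  target_state n (j mod S n) i.
Proof.
  intros p Hp.
  destruct (classic (exists x0, (x0 < 2 ^ n)%nat /\ outcome x0 = j)) as [[x0 [Hx0 Hj]]|Hnone].
  - assert (Ht : (j mod S n <= n)%nat) by (pose proof (Nat.mod_upper_bound j (S n)); lia).
    pose proof (fun i => distill_kraus_output j x0 i Hx0 Hj) as Hout.
    assert (HW : 0 <= type_weight (j / S n))
      by (unfold type_weight; apply Rmult_le_pos; apply pow_le, Cnorm2_nonneg).
    assert (HWpos : 0 < type_weight (j / S n)).
    { unfold p in Hp; rewrite (Vnorm2_comb _ _ _ _ Ht HW Hout) in Hp.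
      pose proof (pow_lt 2 (j mod S n)); nra. }
    apply (normalized_comb n (j mod S n) (type_weight (j / S n))); auto.
  - exfalso; unfold p, Vnorm2 in Hp; rewrite Rsum_zero in Hp; [lra|]; intros i _.
    unfold distill_kraus; rewrite relabel_kraus_apply_miss, Cnorm2_C0; auto using outcome_target_row_inj.
    intros x Hx Hxj; exfalso; apply Hnone; eauto.
Qed.

Lemma Rsum_by_type (h : nat -> R) :
  Rsum (fun x => h (popcount n x)) (2 ^ n) = Rsum (fun k => INR (type_size k) * h k) (S n).
Proof.
  rewrite (Rsum_classes (popcount n) (S n) (2 ^ n) _ (fun k _ => h k)).
  - apply Rsum_ext; intros k _; rewrite Rsum_const; reflexivity.
  - intros x _; pose proof (popcount_le n x); lia.
  - reflexivity.
Qed.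

Hypothesis normalized : Cnorm2 a + Cnorm2 b = 1.

Lemma distill_kraus_expected_copies :
  INR n * R_I_qubit a b - log2 (INR (S n)) - 3 <=
  Rsum (fun j => Vnorm2 (2 ^ n) (Mapply (2 ^ n) (distill_kraus j) (psi_tensor a b n))
                 * INR (j mod S n)) (S n * S n).
Proof.
  set (C k := INR (type_size k)).
  assert (HC : forall k, 0 <= C k) by (intros; apply pos_INR).
  assert (HW : forall k, 0 <= type_weight k)
    by (intros; unfold type_weight; apply Rmult_le_pos; apply pow_le, Cnorm2_nonneg).
  assert (Hprob : Rsum (fun k => C k * type_weight k) (S n) = 1).
  { rewrite <- (Rsum_Cnorm2_psi_tensor a b normalized n), <- Rsum_by_type.
    apply Rsum_ext; intros; symmetry; apply Cnorm2_psi_tensor_type. }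
  assert (Hent : Rsum (fun k => C k * negxlogx (type_weight k)) (S n) = INR n * R_I_qubit a b).
  { rewrite <- (Rsum_negxlogx_psi_tensor a b normalized n), <- Rsum_by_type.
    apply Rsum_ext; intros; rewrite Cnorm2_psi_tensor_type; reflexivity. }
  assert (Htypes : Rsum (fun k => negxlogx (C k * type_weight k)) (S n) <= log2 (INR (S n)))
    by (apply entropy_le_log2_card; auto using Rmult_le_pos; lia).
  unfold distill_kraus; rewrite relabel_kraus_expectation;
    [|intros; apply outcome_lt|apply target_row_lt|apply outcome_target_row_inj].
  rewrite (Rsum_classes (popcount n) (S n) (2 ^ n) _
             (fun k r => type_weight k * INR (block_exp n (type_size k) r))).
  2:{ intros x _; pose proof (popcount_le n x); lia. }
  2:{ intros x _; rewrite Cnorm2_psi_tensor_type, outcome_mod; reflexivity. }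
  apply Rle_trans with (Rsum (fun k => type_weight k * (C k * (log2 (C k) - 3))) (S n)).
  - rewrite (Rsum_ext _ (fun k => C k * negxlogx (type_weight k)
                          - negxlogx (C k * type_weight k) - 3 * (C k * type_weight k))).
    + rewrite !Rsum_minus, Rsum_scal; lra.
    + intros k _; rewrite Rmult_minus_distr_l, Rmult_minus_distr_l, mul_log2_eq_negxlogx by auto; ring.
  - apply Rsum_le; intros k _; rewrite Rsum_scal.
    apply Rmult_le_compat_l; [auto|apply Rsum_block_exp_ge, type_size_lt].
Qed.

End Distillation.

Theorem mainTheorem8 (alpha beta : Cx)
  (Hnorm : Cnorm2 alpha + Cnorm2 beta = 1) (eps : R) (Heps : 0 < eps) :
  exists n0 : nat, forall n : nat, (n0 <= n)%nat ->
    exists (m : nat) (K : nat -> Mat) (r : nat -> nat),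
      incoherent_op (2 ^ n) m K /\
      (forall j, (j < m)%nat ->
         let p := Vnorm2 (2 ^ n) (Mapply (2 ^ n) (K j) (psi_tensor alpha beta n)) in
         0 < p ->
         (r j <= n)%nat /\
         exists s : nat -> nat, perm_on (2 ^ n) s /\
           forall i, (i < 2 ^ n)%nat ->
             Vscale (RtoC (/ sqrt p)) (Mapply (2 ^ n) (K j) (psi_tensor alpha beta n)) (s i)
               = target_state n (r j) i) /\
      Rsum (fun j => Vnorm2 (2 ^ n) (Mapply (2 ^ n) (K j) (psi_tensor alpha beta n))
                       * INR (r j)) m
        >= INR n * (R_I_qubit alpha beta - eps).
Proof.
  destruct (eventually_log2_le_linear eps 3 Heps) as [n0 Hn0]; exists n0; intros n Hn.
  exists (S n * S n)%nat, (distill_kraus alpha beta n), (fun j => j mod S n)%nat.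
  split; [apply distill_kraus_incoherent|split].
  - intros j _ p Hp; split; [pose proof (Nat.mod_upper_bound j (S n)); lia|].
    exists (fun i => i); split; [split; auto|].
    apply distill_kraus_target; auto.
  - pose proof (distill_kraus_expected_copies alpha beta n Hnorm); pose proof (Hn0 n Hn).
    apply Rle_ge; nra.
Qed.
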